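(* Let $c_1,\dots,c_l\in\mathbb{R}[z_1,\dots,z_m]$ with $l\ge m$ be the constraint polynomials of a framework (as described in the context), let $\mathbf{R}(z)$ be its $m\times l$ rigidity matrix with entries $\mathbf{R}(z)_{ij}=\partial c_j/\partial z_i$, let $p_1,\dots,p_\mu$ ($\mu=\binom{l}{l-m}$) be all $m\times m$ minors of $\mathbf{R}(z)$, and let $V_1\subset\mathbb{R}^m$ be the shakiness variety, i.e. the common zero set of $p_1,\dots,p_\mu$. Assume $V_1\neq\mathbb{R}^m$. If $X$ is a regular point of $V_1$, then $\operatorname{rk}\mathbf{R}(X)=m-1$; equivalently, at $X$ there is, up to a nonzero scalar factor, exactly one non-trivial infinitesimal (instantaneous) flex, i.e. the space of vectors $v\in\mathbb{R}^m$ with $\nabla c_j(X)\cdot v=0$ for all $j=1,\dots,l$ is one-dimensional.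
   Context: A planar (resp. spatial) bar-joint framework with $w$ joints $X_1,\dots,X_w$ and $e$ bars of prescribed non-zero lengths is described algebraically by unknowns $z_1,\dots,z_m$ (the joint coordinates, $m=2w$ resp. $m=3w$) and $l$ polynomial equations $c_1=\dots=c_l=0$: one quadratic equation per bar (squared distance of its endpoints equals the squared bar length), or a linear equation when a joint is an ideal point, together with 3 (resp. 6) linear equations eliminating the Euclidean isometries (so $l=e+3$ resp. $l=e+6$). Each hypersurface $c_j=0$ is a hyperplane or a regular hyperquadric. Because isometries are eliminated by the linear constraints, every nonzero vector $v$ with $\nabla c_j(X)\cdot v=0$ for all $j$ is a non-trivial infinitesimal flex at the configuration $X$. A point $X\in V_1$ is called regular if the Jacobian matrix of $(p_1,\dots,p_\mu)$ at $X$ has rank equal to $m-\dim_X V_1$ (Jacobian criterion). *)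

From mathcomp Require Import all_boot all_order all_algebra.
From mathcomp Require Import mpoly.
From mathcomp Require Import reals.
Set Implicit Arguments. Unset Strict Implicit. Unset Printing Implicit Defensive.
Import Order.TTheory GRing.Theory Num.Theory.
Local Open Scope ring_scope.

Section Framework.
Variables (R : realType) (m l : nat).

Definition rigidity_matrix (c : 'I_l -> {mpoly R[m]}) : 'M[{mpoly R[m]}]_(m, l) :=
  \matrix_(i < m, j < l) mderiv i (c j).

Definition rigidity_at (c : 'I_l -> {mpoly R[m]}) (X : 'I_m -> R) : 'M[R]_(m, l) :=
  \matrix_(i < m, j < l) (mderiv i (c j)).@[X].

(* A choice of m columns among l, as a strictly increasing map 'I_m -> 'I_l;
   there are exactly binomial(l, m) of them. *)
Definition col_choice := {f : {ffun 'I_m -> 'I_l} | [forall i : 'I_m, forall j : 'I_m, (i < j)%N ==> (f i < f j)%N]}.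

Definition minor_poly (c : 'I_l -> {mpoly R[m]}) (f : col_choice) : {mpoly R[m]} :=
  \det (colsub (val f) (rigidity_matrix c)).

Definition shakiness_variety (c : 'I_l -> {mpoly R[m]}) : ('I_m -> R) -> Prop :=
  fun X => forall f : col_choice, (minor_poly c f).@[X] = 0.

Definition minors_jacobian (c : 'I_l -> {mpoly R[m]}) (X : 'I_m -> R)
  : 'M[R]_(m, #|{: col_choice}|) :=
  \matrix_(i < m, k < #|{: col_choice}|) (mderiv i (minor_poly c (enum_val k))).@[X].

End Framework.

Section Dimension.
Variables (R : realType) (m : nat).

Definition in_ball (X : 'I_m -> R) (eps : R) (x : 'I_m -> R) : Prop :=
  forall i, `|x i - X i| < eps.

Definition proj_has_interior (A : ('I_m -> R) -> Prop) (d : nat) : Prop :=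
  exists (f : 'I_d -> 'I_m), injective f /\
  exists (y : 'I_d -> R) (r : R), 0 < r /\
    forall z : 'I_d -> R, (forall k, `|z k - y k| < r) ->
      exists x, A x /\ forall k, x (f k) = z k.

(* Semialgebraic dimension of A is >= d. *)
Definition dim_ge (A : ('I_m -> R) -> Prop) (d : nat) : Prop := proj_has_interior A d.

(* local dimension of V at X equals d: dim (V \cap B(X,eps)) >= d for all eps > 0,
   but not >= d+1 for all eps > 0 (i.e. d = lim_{eps->0} dim (V \cap B(X,eps))). *)
Definition local_dim (V : ('I_m -> R) -> Prop) (X : 'I_m -> R) (d : nat) : Prop :=
  (forall eps : R, 0 < eps -> dim_ge (fun x => V x /\ in_ball X eps x) d) /\
  ~ (forall eps : R, 0 < eps -> dim_ge (fun x => V x /\ in_ball X eps x) d.+1).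

End Dimension.

(* Regular point of V_1 (Jacobian criterion). *)
Definition regular_point (R : realType) (m l : nat) (c : 'I_l -> {mpoly R[m]})
  (X : 'I_m -> R) : Prop :=
  shakiness_variety c X /\
  exists d : nat, local_dim (shakiness_variety c) X d /\
    \rank (minors_jacobian c X) = (m - d)%N.

From mathcomp Require Import all_boot all_order all_algebra.
From mathcomp Require Import mpoly.
From mathcomp Require Import reals.
From mathcomp Require Import zify.
Import Order.TTheory GRing.Theory Num.Theory.
Local Open Scope ring_scope.
Set Implicit Arguments. Unset Strict Implicit.

(* At a point X of V_1 the rigidity matrix R(X) has rank < m, since otherwise
   some m x m minor would not vanish at X.  If its rank were < m - 1, all its
   (m-1)-minors would vanish; by the Leibniz rule the derivative of a
   determinant is a combination of cofactors, so every partial derivative of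
   every minor p_k would vanish at X.  The Jacobian of the p_k would then be
   zero, and the Jacobian criterion would force dim_X V_1 = m.  But then V_1
   contains an open box, and a polynomial vanishing on an open box vanishes
   everywhere, contradicting V_1 <> R^m. *)

Section MatrixRank.
Variable F : fieldType.

Lemma mxrank_colsub_le m n n' (g : 'I_n' -> 'I_n) (A : 'M[F]_(m, n)) :
  (\rank (colsub g A) <= \rank A)%N.
Proof. by rewrite -[A in colsub _ A]mulmx1 -mulmx_colsub mxrankM_maxl. Qed.

Lemma mxrank_rowsub_le m m' n (g : 'I_m' -> 'I_m) (A : 'M[F]_(m, n)) :
  (\rank (rowsub g A) <= \rank A)%N.
Proof. by rewrite mxrankS // rowsub_sub. Qed.

Lemma cofactor_eq0 k (A : 'M[F]_k) i j : (\rank A < k.-1)%N -> cofactor A i j = 0.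
Proof.
move=> rkA; apply/eqP; apply: contraTT rkA => nz; rewrite -leqNgt.
rewrite /cofactor mulf_eq0 signr_eq0 /= in nz.
rewrite -(mxrank_unit (A := row' i (col' j A))) ?unitmxE ?unitfE //.
rewrite row'Esub col'Esub.
exact: leq_trans (mxrank_rowsub_le _ _) (mxrank_colsub_le _ _).
Qed.

End MatrixRank.

Lemma sorted_enum_ord_set l (S : {set 'I_l}) :
  sorted (fun x y : 'I_l => (x < y)%N) (enum S).
Proof.
rewrite /enum_mem -enumT; apply: sorted_filter; first exact: (@ltn_trans).
by have := iota_ltn_sorted 0 l; rewrite -val_enum_ord sorted_map.
Qed.

(* Enumerating the image of h in increasing order gives f, and s records
   the position of each h i in that enumeration. *)
Lemma injective_sorted_factor m l (h : 'I_m -> 'I_l) :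
  injective h -> exists (f : col_choice m l) (s : 'I_m -> 'I_m), h =1 val f \o s.
Proof.
move=> h_inj; pose S := [set h i | i in 'I_m].
have cardS : #|S| = m by rewrite card_imset // card_ord.
pose g (i : 'I_m) : 'I_l := enum_val (cast_ord (esym cardS) i).
have g_incr : [forall i : 'I_m, forall j : 'I_m, (i < j)%N ==> (finfun g i < finfun g j)%N].
  apply/forallP => i; apply/forallP => j; apply/implyP => lt_ij.
  rewrite !ffunE /g !(enum_val_nth (h i)).
  have ltn_tr : transitive (fun x y : 'I_l => (x < y)%N) by move=> ???; apply: ltn_trans.
  by apply: (sorted_ltn_nth ltn_tr (h i) (sorted_enum_ord_set S)); rewrite ?inE -?cardE.
have hS i : h i \in S by apply: imset_f.
exists (exist _ (finfun g) g_incr), (fun i => cast_ord cardS (enum_rank_in (hS i) (h i))).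
by move=> i /=; rewrite ffunE /g cast_ordK enum_rankK_in.
Qed.

Lemma exists_minor_neq0 (F : fieldType) m l (A : 'M[F]_(m, l)) :
  \rank A = m -> exists f : col_choice m l, \det (colsub (val f) A) != 0.
Proof.
move=> rkA.
have rfAt : row_full A^T by rewrite /row_full mxrank_tr rkA.
have [f [s hfs]] := injective_sorted_factor (fullrankfun_inj (rkA := rfAt)).
exists f.
have rk_h : \rank (colsub (fullrankfun rfAt) A) = m.
  by rewrite -mxrank_tr trmx_mxsub mxrank_unit // fullrowsub_unit.
have rk_f : \rank (colsub (val f) A) = m.
  apply/eqP; rewrite eqn_leq rank_leq_row -{1}rk_h.
  rewrite (eq_colsub _ hfs) colsub_comp; exact: mxrank_colsub_le.
by rewrite -unitfE -unitmxE -row_free_unit /row_free rk_f.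
Qed.

Section DerivativeDeterminant.
Variables (R : comNzRingType) (n : nat) (i : 'I_n).
Local Notation D := (mderiv i).

Lemma mderiv_prod k (F : 'I_k -> {mpoly R[n]}) :
  D (\prod_(j < k) F j) =
  \sum_(j0 < k) \prod_(j < k) (if j == j0 then D (F j) else F j).
Proof.
elim: k F => [|k IHk] F; first by rewrite !big_ord0 -mpolyC1 mderivC.
have max_neq_widen (j : 'I_k) : (ord_max == widen_ord (leqnSn k) j) = false.
  by rewrite eqE /= eqn_leq leqNgt ltn_ord.
rewrite big_ord_recr mderivM IHk big_distrl [RHS]big_ord_recr /=.
congr (_ + _); first by apply: eq_bigr => j0 _; rewrite big_ord_recr /= max_neq_widen.
rewrite big_ord_recr /= eqxx; congr (_ * _).
by apply: eq_bigr => j _; rewrite eq_sym max_neq_widen.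
Qed.

Lemma mderiv_det k (A : 'M[{mpoly R[n]}]_k) :
  D (\det A) = \sum_(r < k) \sum_(j < k) D (A r j) * cofactor A r j.
Proof.
pose A' r := \matrix_(a, b) if a == r then D (A a b) else A a b.
have -> : D (\det A) = \sum_(r < k) \det (A' r).
  have mderiv_sign (b : bool) p : D ((-1) ^+ b * p) = (-1) ^+ b * D p.
    by rewrite !mulr_sign; case: b; rewrite ?mderivN.
  rewrite /determinant raddf_sum exchange_big; apply: eq_bigr => s _ /=.
  rewrite mderiv_sign mderiv_prod big_distrr.
  apply: eq_bigr => r _; congr (_ * _); apply: eq_bigr => a _.
  by rewrite mxE; case: (a == r).
apply: eq_bigr => r _; rewrite (expand_det_row _ r); apply: eq_bigr => j _.
rewrite mxE eqxx; congr (_ * (_ * \det _)).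
by apply/matrixP => a b; rewrite !mxE eq_sym (negbTE (neq_lift r a)).
Qed.

End DerivativeDeterminant.

Lemma meval_mderiv_det_eq0 (F : fieldType) n k (A : 'M[{mpoly F[n]}]_k)
    (X : 'I_n -> F) (i : 'I_n) :
  (\rank (map_mx (meval X) A) < k.-1)%N -> (mderiv i (\det A)).@[X] = 0.
Proof.
move=> rkAX; rewrite mderiv_det rmorph_sum big1 // => r _.
rewrite rmorph_sum big1 // => j _.
by rewrite rmorphM /= -cofactor_map_mx cofactor_eq0 ?mulr0.
Qed.

Section Framework.
Variables (R : realType) (m l : nat) (c : 'I_l -> {mpoly R[m]}) (X : 'I_m -> R).

Lemma meval_minor_matrix (f : col_choice m l) :
  map_mx (meval X) (colsub (val f) (rigidity_matrix c)) =
  colsub (val f) (rigidity_at c X).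
Proof. by apply/matrixP => a b; rewrite !mxE. Qed.

Lemma rank_rigidity_lt_on_shakiness :
  shakiness_variety c X -> (\rank (rigidity_at c X) < m)%N.
Proof.
move=> VX; rewrite ltn_neqAle rank_leq_row andbT.
apply/negP => /eqP /exists_minor_neq0 [f]; have := VX f.
by rewrite /minor_poly -det_map_mx meval_minor_matrix => ->; rewrite eqxx.
Qed.

Lemma minors_jacobian_eq0 :
  (\rank (rigidity_at c X) < m.-1)%N -> minors_jacobian c X = 0.
Proof.
move=> rkX; apply/matrixP => i k; rewrite !mxE meval_mderiv_det_eq0 //.
rewrite meval_minor_matrix; exact: leq_ltn_trans (mxrank_colsub_le _ _) rkX.
Qed.

End Framework.

Lemma poly_eq0_near0 (R : realFieldType) (q : {poly R}) (eps : R) :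
  0 < eps -> (forall t, 0 <= t < eps -> q.[t] = 0) -> q = 0.
Proof.
move=> eps_gt0 q0; pose del := eps / (size q).+1%:R.
have del_gt0 : 0 < del by rewrite divr_gt0.
apply: (@roots_geq_poly_eq0 _ q [seq k%:R * del | k <- iota 0 (size q)]).
- apply/allP => t /mapP [k]; rewrite mem_iota add0n => /andP [_ k_lt] ->.
  apply/eqP/q0; rewrite mulr_ge0 ?ler0n ?ltW //=.
  by rewrite /del mulrCA gtr_pMr // ltr_pdivrMr ?ltr0Sn // mul1r ltr_nat ltnS ltnW.
- rewrite map_inj_uniq ?iota_uniq // => a b /(mulIf (lt0r_neq0 del_gt0)) /eqP.
  by rewrite eqr_nat => /eqP.
- by rewrite size_map size_iota.
Qed.

(* Restrict p to the line through x0 and Y: the resulting univariate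
   polynomial vanishes near 0, hence identically, in particular at 1. *)
Lemma meval_eq0_of_ball (R : realFieldType) n (p : {mpoly R[n]})
    (x0 : 'I_n -> R) (r : R) :
  0 < r -> (forall w, (forall i, `|w i - x0 i| < r) -> p.@[w] = 0) ->
  forall Y, p.@[Y] = 0.
Proof.
move=> r_gt0 p0 Y.
pose line t i := x0 i + t * (Y i - x0 i).
pose q : {poly R} := mmap polyC (fun i => (x0 i)%:P + 'X * (Y i - x0 i)%:P) p.
have qE t : q.[t] = p.@[line t].
  rewrite /q /mmap mevalE horner_sum; apply: eq_bigr => mm _.
  rewrite hornerM hornerC horner_prod; congr (_ * _).
  by apply: eq_bigr => j _; rewrite !hornerE.
pose M := 1 + \sum_i `|Y i - x0 i|.
have M_gt0 : 0 < M by rewrite ltr_pwDl // sumr_ge0.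
have YM i : `|Y i - x0 i| <= M.
  by rewrite /M (bigD1 i) //= addrCA lerDl addr_ge0 // sumr_ge0.
have q_eq0 : q = 0.
  apply: (@poly_eq0_near0 _ _ (r / M)); first by rewrite divr_gt0.
  move=> t /andP [t_ge0 t_lt]; rewrite qE; apply: p0 => i.
  rewrite /line addrC addKr normrM (ger0_norm t_ge0).
  by apply: le_lt_trans (ler_wpM2l t_ge0 (YM i)) _; rewrite -ltr_pdivlMr.
have line1 : line 1 =1 Y by move=> i; rewrite /line mul1r addrC subrK.
by rewrite -(meval_eq p line1) -qE q_eq0 horner0.
Qed.

Lemma proj_has_interior_full (R : realType) m (A : ('I_m -> R) -> Prop) d :
  (m <= d)%N -> proj_has_interior A d ->
  exists x0 r, 0 < r /\ forall w, in_ball x0 r w -> exists2 x, A x & x =1 w.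
Proof.
move=> md [f [f_inj [y [r [r_gt0 Ay]]]]].
have f_onto i : exists k, f k = i.
  have : i \in codom f by apply: inj_card_onto; rewrite ?card_ord.
  by case/codomP => k ->; exists k.
case: (Ay y) => [k|x0 [_ x0f]]; first by rewrite subrr normr0.
exists x0, r; split=> // w w_near.
case: (Ay (w \o f)) => [k|x [Ax xf]]; first by rewrite -x0f; apply: w_near.
by exists x => // i; have [k <-] := f_onto i; apply: xf.
Qed.

Lemma meval_eq0_of_dim_ge (R : realType) m (p : {mpoly R[m]})
    (A : ('I_m -> R) -> Prop) d :
  (m <= d)%N -> dim_ge A d -> (forall x, A x -> p.@[x] = 0) ->
  forall Y, p.@[Y] = 0.
Proof.
move=> md /(proj_has_interior_full md) [x0 [r [r_gt0 Ar]]] pA.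
apply: (meval_eq0_of_ball r_gt0) => w /Ar [x /pA px_eq0 xw].
by rewrite -(meval_eq p xw).
Qed.

Unset Implicit Arguments. Set Strict Implicit.

Theorem lemma1 (R : realType) (m l : nat) (c : 'I_l -> {mpoly R[m]})
  (hlm : (m <= l)%N)
  (hdeg : forall j, (msize (c j) == 2)%N || (msize (c j) == 3)%N)
  (hV : exists Y : 'I_m -> R, ~ shakiness_variety c Y)
  (X : 'I_m -> R) (hX : regular_point c X) :
  \rank (rigidity_at c X) = (m - 1)%N /\
  \rank (kermx (rigidity_at c X)) = 1%N.
Proof.
case: hX => VX [d [[dimV _] rk_jacobian]].
have rk_lt := rank_rigidity_lt_on_shakiness VX.
have rk_ge : ~ (\rank (rigidity_at c X) < m.-1)%N.
  move=> /minors_jacobian_eq0 jacobian0.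
  have md : (m <= d)%N.
    by move: rk_jacobian; rewrite jacobian0 mxrank0 => /esym/eqP; rewrite subn_eq0.
  have [Y nVY] := hV; apply: nVY => f.
  by apply: (meval_eq0_of_dim_ge md (dimV 1 ltr01)) => x [].
rewrite mxrank_ker; lia.
Qed.
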